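(* Let $0<r<q-1$. Then \[\mathrm{ind}_{IZ}^G\chi_r\neq \mathrm{Ker}\,T_{-1,0}\oplus\mathrm{Ker}\,T_{1,2}.\]
   Context: $F$ is a finite extension of $\mathbb Q_p$ with ring of integers $\mathcal O$, uniformizer $\varpi$, residue field $\mathbb F_q$; $[x]$ is the multiplicative representative of $x\in\mathbb F_q$; $\bar a$ the reduction of $a\in\mathcal O$. $G=\mathrm{GL}_2(F)$, $K=\mathrm{GL}_2(\mathcal O)$, $Z$ the centre, $I$ the Iwahori subgroup of $K$ (lower-left entry in $\varpi\mathcal O$). $\chi_r:IZ\to\overline{\mathbb F}_p^\times$, $\begin{pmatrix} a&b\\ \varpi c&d\end{pmatrix}\mapsto\bar d^{\,r}$, $\mathrm{diag}(\varpi,\varpi)\mapsto1$; $\mathrm{ind}_{IZ}^G\chi_r$ is the compact induction, and $[g,1]$ denotes the element supported on $IZg^{-1}$ with value $1$ at $g^{-1}$. With $\beta=\begin{pmatrix}0&1\\ \varpi&0\end{pmatrix}$, $w=\begin{pmatrix}0&1\\1&0\end{pmatrix}$, $I_1=\{[\lambda]:\lambda\in\mathbb F_q\}$, $T_{-1,0},T_{1,2}$ are the $G$-endomorphisms of $\mathrm{ind}_{IZ}^G\chi_r$ with $T_{-1,0}[g,1]=\sum_{\lambda\in I_1}[g\begin{pmatrix}\varpi&\lambda\\0&1\end{pmatrix},1]$ and $T_{1,2}[g,1]=\sum_{\lambda\in I_1}[g\beta\begin{pmatrix}1&\lambda\\0&1\end{pmatrix}w,1]$. (It is known that $\mathrm{Ker}\,T_{-1,0}\cap\mathrm{Ker}\,T_{1,2}=0$.)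 *)

From mathcomp Require Import all_boot all_order all_algebra.
Set Implicit Arguments. Unset Strict Implicit. Unset Printing Implicit Defensive.
Import Order.TTheory GRing.Theory Num.Theory.
Local Open Scope ring_scope.

(* The base field F : a complete discretely valued field of characteristic *)
(* 0 whose residue field k is finite (of characteristic p).  These are     *)
(* exactly the finite extensions of Q_p.          *)
(* The valuation v : F -> int is only meaningful on nonzero elements.      *)

Section LocalField.
Variables (F : fieldType) (v : F -> int).

Definition vge (N : int) (x : F) : Prop := x = 0 \/ N <= v x.

Definition inO (x : F) : Prop := vge 0 x.

Definition discrete_valuation : Prop :=
  [/\ forall x y, x != 0 -> y != 0 -> v (x * y) = v x + v y,
      forall x y, x != 0 -> y != 0 -> x + y != 0 ->
                  Order.min (v x) (v y) <= v (x + y)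
    & exists x, x != 0 /\ v x = 1].

Definition v_complete : Prop :=
  forall u : nat -> F,
    (forall N : int, exists M, forall m n, (M <= m)%N -> (M <= n)%N -> vge N (u m - u n)) ->
    exists l, forall N : int, exists M, forall n, (M <= n)%N -> vge N (u n - l).

(* p-adic local field data: F with valuation v, uniformizer varpi,
   residue field k with reduction map red : O -> k (extended arbitrarily
   outside O), multiplicative (Teichmueller) representatives teich. *)
Definition padic_field (p : nat) (varpi : F) (k : finFieldType)
    (red : F -> k) (teich : k -> F) : Prop :=
  [/\ [/\ [pchar F] =i pred0, discrete_valuation & v_complete],
      varpi != 0 /\ v varpi = 1,
      p \in [pchar k],
      [/\ red 1 = 1,
          forall x y, inO x -> inO y -> red (x + y) = red x + red y,
          forall x y, inO x -> inO y -> red (x * y) = red x * red y,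
          forall a : k, exists x, inO x /\ red x = a
        & forall x, inO x -> (red x = 0 <-> vge 1 x)]
    &
      forall a : k, [/\ inO (teich a), red (teich a) = a
                       & teich a ^+ #|k| = teich a]].

End LocalField.

(* GL_2(F) is modelled inside 'M[F]_2 (invertible matrices = unitmx).     *)

Definition mx2 (F : fieldType) (a b c d : F) : 'M[F]_2 :=
  \matrix_(i < 2, j < 2)
    if (i == 0 :> nat) then (if (j == 0 :> nat) then a else b)
    else (if (j == 0 :> nat) then c else d).

Section Induction.
Variables (F : fieldType) (v : F -> int) (varpi : F) (k : finFieldType)
          (red : F -> k) (C : fieldType) (iota : {rmorphism k -> C}) (r : nat).

Definition inI (m : 'M[F]_2) : Prop :=
  [/\ forall i j, inO v (m i j),
      vge v 1 (m ord_max ord0),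
      \det m != 0 & v (\det m) = 0].

Definition inIZ (h : 'M[F]_2) : Prop :=
  exists c m, c != 0 /\ inI m /\ h = c *: m.

(* chi_r on IZ:  (a b; varpi c d) |-> dbar^r,  diag(varpi,varpi) |-> 1.
   For h = c * m (c scalar, m in I) this is the reduction of the unit part
   of the lower-right entry of h, raised to r. *)
Definition chi (h : 'M[F]_2) : C :=
  iota (red (h ord_max ord_max / varpi ^ (v (h ord_max ord_max)))) ^+ r.

(* the compact induction ind_{IZ}^G chi_r, as functions on G
   (extended by 0 to non-invertible matrices) *)
Definition in_ind (f : 'M[F]_2 -> C) : Prop :=
  [/\ forall g, g \notin unitmx -> f g = 0,
      forall h g, inIZ h -> g \in unitmx -> f (h *m g) = chi h * f g
    & exists s : seq 'M[F]_2, forall g, f g != 0 ->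
        exists2 x, x \in s & exists h, inIZ h /\ g = h *m x].

(* phi = [g,1]: supported on IZ g^{-1}, with value 1 at g^{-1} *)
Definition is_bracket (g : 'M[F]_2) (phi : 'M[F]_2 -> C) : Prop :=
  [/\ in_ind phi, phi (invmx g) = 1
    & forall x, phi x != 0 -> exists h, inIZ h /\ x = h *m invmx g].

Definition gact (g : 'M[F]_2) (f : 'M[F]_2 -> C) : 'M[F]_2 -> C :=
  fun x => f (x *m g).

Definition G_endo (T : ('M[F]_2 -> C) -> ('M[F]_2 -> C)) : Prop :=
  [/\ forall f, in_ind f -> in_ind (T f),
      forall (a : C) f1 f2, in_ind f1 -> in_ind f2 ->
        T (fun x => a * f1 x + f2 x) = (fun x => a * T f1 x + T f2 x)
    & forall g f, g \in unitmx -> in_ind f -> T (gact g f) = gact g (T f)].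

Definition hecke_op (t : k -> 'M[F]_2)
    (T : ('M[F]_2 -> C) -> ('M[F]_2 -> C)) : Prop :=
  G_endo T /\
  forall g phi (psi : k -> 'M[F]_2 -> C),
    g \in unitmx -> is_bracket g phi ->
    (forall l, is_bracket (g *m t l) (psi l)) ->
    T phi = (fun x => \sum_(l : k) psi l x).

Definition in_ker (T : ('M[F]_2 -> C) -> ('M[F]_2 -> C)) (f : 'M[F]_2 -> C) : Prop :=
  in_ind f /\ T f = (fun _ => 0).

End Induction.

Definition betam (F : fieldType) (varpi : F) : 'M[F]_2 := mx2 0 1 varpi 0.
Definition wm (F : fieldType) : 'M[F]_2 := mx2 0 1 1 0.

Definition t_m10 (F : fieldType) (k : finFieldType) (varpi : F) (teich : k -> F)
  (l : k) : 'M[F]_2 := mx2 varpi (teich l) 0 1.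
Definition t_12 (F : fieldType) (k : finFieldType) (varpi : F) (teich : k -> F)
  (l : k) : 'M[F]_2 := betam varpi *m mx2 1 (teich l) 0 1 *m wm F.

(* Suppose [[1, 1] = f1 + f2] with [T_{-1,0} f1 = 0] and [T_{1,2} f2 = 0]. Decomposing the
   double cosets, [(T_{-1,0} f) z = \sum_m f (a_m10 m z)] and [(T_{1,2} f) z = \sum_n f (a_12 n z)].
   On the Bruhat-Tits tree, where [IZ z] is an edge, one of these sums taken at a neighbour
   of an edge [z] outside [IZ] involves [f1 z] or [f2 z] and [q - 1] values at edges of larger
   height. Off [IZ] we have [f1 = - f2], since [[1, 1]] vanishes there, and [f1], [f2] have
   finite support; so downward induction on the height kills [f1] and [f2] off [IZ]. The same
   sums at the identity then give [f1 1 = f2 1 = 0], contradicting [[1, 1] 1 = 1]. *)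

From mathcomp Require Import all_boot all_order all_algebra.
From mathcomp Require Import zify ring.
From Stdlib Require Import ClassicalEpsilon FunctionalExtensionality.
Set Implicit Arguments. Unset Strict Implicit. Unset Printing Implicit Defensive.
Import Order.TTheory GRing.Theory Num.Theory.
Local Open Scope ring_scope.

Section Mx2.
Variable F : fieldType.
Implicit Types a b c d e : F.

Lemma ord2P (i : 'I_2) : i = ord0 \/ i = ord_max.
Proof. by case: i => [[|[|i]] hi] //; [left|right]; apply: val_inj. Qed.

Lemma mx2_00 a b c d : mx2 a b c d ord0 ord0 = a. Proof. by rewrite mxE. Qed.
Lemma mx2_01 a b c d : mx2 a b c d ord0 ord_max = b. Proof. by rewrite mxE. Qed.
Lemma mx2_10 a b c d : mx2 a b c d ord_max ord0 = c. Proof. by rewrite mxE. Qed.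
Lemma mx2_11 a b c d : mx2 a b c d ord_max ord_max = d. Proof. by rewrite mxE. Qed.

Lemma mx2_eta (M : 'M[F]_2) :
  M = mx2 (M ord0 ord0) (M ord0 ord_max) (M ord_max ord0) (M ord_max ord_max).
Proof.
by apply/matrixP => i j; case: (ord2P i) => ->; case: (ord2P j) => ->; rewrite mxE.
Qed.

Lemma mul_mx2 a b c d a' b' c' d' :
  mx2 a b c d *m mx2 a' b' c' d' =
  mx2 (a * a' + b * c') (a * b' + b * d') (c * a' + d * c') (c * b' + d * d').
Proof.
apply/matrixP => i j; rewrite !mxE big_ord_recl big_ord1 !mxE /=.
by case: (ord2P i) => ->; case: (ord2P j) => ->.
Qed.

Lemma scale_mx2 e a b c d : e *: mx2 a b c d = mx2 (e * a) (e * b) (e * c) (e * d).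
Proof.
by apply/matrixP => i j; rewrite !mxE; case: (ord2P i) => ->; case: (ord2P j) => ->.
Qed.

Lemma mx2_1 : (1%:M : 'M[F]_2) = mx2 1 0 0 1.
Proof.
by apply/matrixP => i j; rewrite !mxE; case: (ord2P i) => ->; case: (ord2P j) => ->.
Qed.

Lemma mx2_inj a b c d a' b' c' d' :
  mx2 a b c d = mx2 a' b' c' d' -> [/\ a = a', b = b', c = c' & d = d'].
Proof.
move=> e; split.
- by rewrite -(mx2_00 a b c d) e mx2_00.
- by rewrite -(mx2_01 a b c d) e mx2_01.
- by rewrite -(mx2_10 a b c d) e mx2_10.
- by rewrite -(mx2_11 a b c d) e mx2_11.
Qed.

Lemma det_mx2 a b c d : \det (mx2 a b c d) = a * d - b * c.
Proof.
rewrite (expand_det_row _ ord0) big_ord_recl big_ord1 /cofactor !det_mx11 !mxE /=.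
by rewrite expr0 expr1 !mul1r; ring.
Qed.

Lemma unitmx_mx2 a b c d : (mx2 a b c d \in unitmx) = (a * d - b * c != 0).
Proof. by rewrite unitmxE det_mx2 unitfE. Qed.

Lemma scalemx_mul m n l e e' (A : 'M[F]_(m, n)) (B : 'M[F]_(n, l)) :
  (e *: A) *m (e' *: B) = (e * e') *: (A *m B).
Proof. by rewrite -scalemxAl -scalemxAr scalerA. Qed.

End Mx2.

Ltac mx2_field := rewrite ?mx2_1 !mul_mx2; congr mx2; field.

Section Valuation.
Variables (F : fieldType) (v : F -> int).
Hypothesis hv : discrete_valuation v.
Implicit Types x y e : F.

Lemma valuationM x y : x != 0 -> y != 0 -> v (x * y) = v x + v y.
Proof. by case: hv => H _ _; apply: H. Qed.

Lemma valuation1 : v 1 = 0.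
Proof.
have o : (1 : F) != 0 := oner_neq0 _.
by have := valuationM o o; rewrite mulr1 => H; lia.
Qed.

Lemma valuationN x : v (- x) = v x.
Proof.
have [->|x0] := eqVneq x 0; first by rewrite oppr0.
have N10 : (-1 : F) != 0 by rewrite oppr_eq0 oner_neq0.
have vN1 : v (-1) = 0 by have := valuationM N10 N10; rewrite mulrNN mulr1 valuation1 => H; lia.
by rewrite -mulN1r valuationM // vN1 add0r.
Qed.

Lemma valuationV x : x != 0 -> v x^-1 = - v x.
Proof.
by move=> x0; have := valuationM (invr_neq0 x0) x0; rewrite mulVf // valuation1 => H; lia.
Qed.

Lemma valuationX x (m : nat) : x != 0 -> v (x ^+ m) = m%:Z * v x.
Proof.
move=> x0; elim: m => [|n IH]; first by rewrite expr0 valuation1 mul0r.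
by rewrite exprS valuationM ?expf_neq0 // IH intS mulrDl mul1r.
Qed.

Lemma valuationXz x (n : int) : x != 0 -> v (x ^ n) = n * v x.
Proof.
move=> x0; case: n => m; first exact: valuationX.
change (v ((x ^+ m.+1)^-1) = Negz m * v x).
rewrite valuationV ?expf_neq0 // valuationX // NegzE; lia.
Qed.

Lemma valuationD_ge N x y : x != 0 -> y != 0 -> x + y != 0 ->
  N <= v x -> N <= v y -> N <= v (x + y).
Proof.
case: hv => _ H _ x0 y0 s0 hx hy; have := H _ _ x0 y0 s0.
by rewrite /Order.min; case: ifP => _ h; exact: le_trans h.
Qed.

Lemma vge0 N : vge v N 0. Proof. by left. Qed.

Lemma vgeE N x : x != 0 -> vge v N x <-> N <= v x.
Proof. by move=> x0; split; [case=> // /eqP; rewrite (negbTE x0)|right]. Qed.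

Lemma vge_val x : vge v (v x) x. Proof. by right. Qed.

Lemma vge_le N M x : M <= N -> vge v N x -> vge v M x.
Proof. by move=> h [->|hx]; [left|right; apply: le_trans hx]. Qed.

Lemma vgeD N x y : vge v N x -> vge v N y -> vge v N (x + y).
Proof.
case=> [->|hx]; first by rewrite add0r.
case=> [->|hy]; first by rewrite addr0; right.
have [s0|s0] := eqVneq (x + y) 0; first by left.
have [->|x0] := eqVneq x 0; first by rewrite add0r; right.
have [->|y0] := eqVneq y 0; first by rewrite addr0; right.
by right; apply: valuationD_ge.
Qed.

Lemma vgeN N x : vge v N x -> vge v N (- x).
Proof. by case=> [->|h]; [rewrite oppr0; left|right; rewrite valuationN]. Qed.

Lemma vgeB N x y : vge v N x -> vge v N y -> vge v N (x - y).
Proof. by move=> hx hy; apply: vgeD => //; apply: vgeN. Qed.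

Lemma vgeM N M x y : vge v N x -> vge v M y -> vge v (N + M) (x * y).
Proof.
case=> [->|hx]; first by rewrite mul0r; left.
case=> [->|hy]; first by rewrite mulr0; left.
have [->|x0] := eqVneq x 0; first by rewrite mul0r; left.
have [->|y0] := eqVneq y 0; first by rewrite mulr0; left.
by right; rewrite valuationM //; apply: lerD.
Qed.

Lemma vgeMl N x y : inO v x -> vge v N y -> vge v N (x * y).
Proof. by move=> hx hy; have := vgeM hx hy; rewrite add0r. Qed.

Lemma vgeMr N x y : vge v N x -> inO v y -> vge v N (x * y).
Proof. by move=> hx hy; have := vgeM hx hy; rewrite addr0. Qed.

Lemma inO0 : inO v 0. Proof. by left. Qed.
Lemma inO1 : inO v 1. Proof. by right; rewrite valuation1. Qed.
Lemma inOD x y : inO v x -> inO v y -> inO v (x + y). Proof. exact: vgeD. Qed.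
Lemma inON x : inO v x -> inO v (- x). Proof. exact: vgeN. Qed.
Lemma inOM x y : inO v x -> inO v y -> inO v (x * y). Proof. exact: vgeMr. Qed.
Lemma inO_vge1 x : vge v 1 x -> inO v x. Proof. exact: vge_le. Qed.

Lemma inOV x : x != 0 -> v x = 0 -> inO v x^-1.
Proof. by move=> x0 vx; right; rewrite valuationV // vx. Qed.

Lemma inO_val_ge0 x : x != 0 -> inO v x -> 0 <= v x.
Proof. by move=> x0; rewrite /inO vgeE. Qed.

Lemma valuationD_small x e : x != 0 -> vge v (v x + 1) e -> x + e != 0 /\ v (x + e) = v x.
Proof.
move=> x0 [->|he]; first by rewrite addr0.
have [->|e0] := eqVneq e 0; first by rewrite addr0.
have s0 : x + e != 0.
  apply: contraTneq he => /eqP; rewrite addr_eq0 => /eqP ->; rewrite valuationN; lia.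
split=> //; apply/eqP; rewrite eq_le valuationD_ge //= ?andbT; try lia.
have me0 : - e != 0 by rewrite oppr_eq0.
case: hv => _ H _; have := H _ _ s0 me0; rewrite addrK => /(_ x0).
by rewrite /Order.min valuationN; case: ifP => _ h; lia.
Qed.

(* The valuation of the vector [(a, b)], with junk value [v 0] at [(0, 0)]. *)
Definition val2 (a b : F) : int :=
  if a == 0 then v b else if b == 0 then v a else Num.min (v a) (v b).

Lemma val2P a b : a != 0 \/ b != 0 ->
  forall N, vge v N a /\ vge v N b <-> N <= val2 a b.
Proof.
move=> ab N; rewrite /val2.
case: (eqVneq a 0) ab => [->|a0] ab.
  have b0 : b != 0 by case: ab; rewrite ?eqxx.
  by rewrite (vgeE N b0); split; [case|split; [left|]].
have [->|b0] := eqVneq b 0.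
  by rewrite (vgeE N a0); split; [case|split; [|left]].
by rewrite !vgeE //; split; [case|]; lia.
Qed.

Lemma val2_eq a b a' b' : a != 0 \/ b != 0 -> a' != 0 \/ b' != 0 ->
  (forall N, vge v N a /\ vge v N b <-> vge v N a' /\ vge v N b') ->
  val2 a b = val2 a' b'.
Proof.
move=> h h' H; apply/eqP; rewrite eq_le.
by apply/andP; split; [apply/(val2P h')/H/(val2P h)|apply/(val2P h)/H/(val2P h')].
Qed.

Lemma val2M c a b : c != 0 -> a != 0 \/ b != 0 -> val2 (c * a) (c * b) = v c + val2 a b.
Proof.
move=> c0 ab; rewrite /val2 !mulf_eq0 (negbTE c0).
case: (eqVneq a 0) ab => [->|a0] ab /=.
  have b0 : b != 0 by case: ab; rewrite ?eqxx.
  by rewrite valuationM.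
have [_|b0] := eqVneq b 0; first by rewrite valuationM.
by rewrite !valuationM //; lia.
Qed.

Lemma val2_0r a : val2 a 0 = v a.
Proof. by rewrite /val2 eqxx; case: ifP => // /eqP ->. Qed.

Lemma val2_0l b : val2 0 b = v b.
Proof. by rewrite /val2 eqxx. Qed.

Lemma val2_l a b : a != 0 -> b != 0 -> v a <= v b -> val2 a b = v a.
Proof. by move=> a0 b0 h; rewrite /val2 (negbTE a0) (negbTE b0); lia. Qed.

Lemma val2_r a b : a != 0 -> b != 0 -> v b <= v a -> val2 a b = v b.
Proof. by move=> a0 b0 h; rewrite /val2 (negbTE a0) (negbTE b0); lia. Qed.

Lemma val2_GL2O A B E D x1 x3 : inO v A -> inO v B -> inO v E -> inO v D ->
  A * D - B * E != 0 -> v (A * D - B * E) = 0 -> x1 != 0 \/ x3 != 0 ->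
  val2 (A * x1 + B * x3) (E * x1 + D * x3) = val2 x1 x3.
Proof.
move=> hA hB hE hD d0 vd nz; set del := A * D - B * E.
have hdi : inO v del^-1 by apply: inOV.
have ex1 : x1 = del^-1 * (D * (A * x1 + B * x3) - B * (E * x1 + D * x3)).
  by rewrite /del; field.
have ex3 : x3 = del^-1 * (A * (E * x1 + D * x3) - E * (A * x1 + B * x3)).
  by rewrite /del; field.
have nz' : A * x1 + B * x3 != 0 \/ E * x1 + D * x3 != 0.
  case: (eqVneq (A * x1 + B * x3) 0) => u1; last by left.
  case: (eqVneq (E * x1 + D * x3) 0) => u2; last by right.
  by move: ex1 ex3 nz; rewrite u1 u2 !mulr0 subr0 mulr0 => -> ->; rewrite eqxx; case.
apply: val2_eq => // N; split; case=> h1 h3.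
- by split; [rewrite ex1|rewrite ex3]; apply: vgeMl => //; apply: vgeB; apply: vgeMl.
- by split; apply: vgeD; apply: vgeMl.
Qed.

End Valuation.

Section LocalField.
Variables (p : nat) (F : fieldType) (v : F -> int) (varpi : F) (k : finFieldType)
  (red : F -> k) (teich : k -> F).
Hypothesis hF : padic_field v p varpi red teich.
Implicit Types x y e : F.

Lemma padic_valuation : discrete_valuation v. Proof. by case: hF => [[]]. Qed.
Let hv := padic_valuation.

Lemma varpi_neq0 : varpi != 0. Proof. by case: hF => _ []. Qed.
Lemma valuation_varpi : v varpi = 1. Proof. by case: hF => _ []. Qed.
Lemma red1 : red 1 = 1. Proof. by case: hF => _ _ _ []. Qed.
Lemma redD x y : inO v x -> inO v y -> red (x + y) = red x + red y.
Proof. by case: hF => _ _ _ [] _ H *; apply: H. Qed.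
Lemma redM x y : inO v x -> inO v y -> red (x * y) = red x * red y.
Proof. by case: hF => _ _ _ [] _ _ H *; apply: H. Qed.
Lemma red_eq0 x : inO v x -> (red x = 0 <-> vge v 1 x).
Proof. by case: hF => _ _ _ [] _ _ _ _ H *; apply: H. Qed.
Lemma inO_teich a : inO v (teich a). Proof. by case: hF => _ _ _ _ /(_ a) []. Qed.
Lemma teichK a : red (teich a) = a. Proof. by case: hF => _ _ _ _ /(_ a) []. Qed.

Lemma red0 : red 0 = 0.
Proof. by apply/red_eq0; [exact: inO0|left]. Qed.

Lemma redN x : inO v x -> red (- x) = - red x.
Proof.
move=> hx; apply/eqP; rewrite -addr_eq0 -redD ?addNr ?red0 //.
exact: inON.
Qed.

Lemma redB x y : inO v x -> inO v y -> red (x - y) = red x - red y.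
Proof. by move=> hx hy; rewrite redD ?redN //; apply: inON. Qed.

Lemma unit_of_red x : inO v x -> red x != 0 -> x != 0 /\ v x = 0.
Proof.
move=> hx hr; have x0 : x != 0 by apply: contraNneq hr => ->; rewrite red0.
split=> //; have := inO_val_ge0 x0 hx.
have : ~ vge v 1 x by move/(red_eq0 hx)/eqP; rewrite (negbTE hr).
by rewrite vgeE //; lia.
Qed.

Lemma red_unit_neq0 x : x != 0 -> v x = 0 -> red x != 0.
Proof.
move=> x0 vx; have hx : inO v x by right; rewrite vx.
by apply/eqP => /(red_eq0 hx); rewrite vgeE // vx.
Qed.

(* [teich 0] is a root of unity lying in [varpi O], hence it is [0]. *)
Lemma teich0 : teich 0 = 0.
Proof.
have [//|t0] := eqVneq (teich 0) 0.
have /vgeE vt : vge v 1 (teich 0) by apply/red_eq0; [apply: inO_teich|apply: teichK].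
have q1 : (1 < #|k|)%N by apply: card_finNzRing_gt1.
have tX : teich 0 ^+ #|k| = teich 0 by case: hF => _ _ _ _ /(_ 0) [].
have e : teich 0 ^+ #|k|.-1 = 1.
  by apply: (mulIf t0); rewrite mul1r -exprSr prednK ?tX //; lia.
have := valuationX hv #|k|.-1 t0; rewrite e (valuation1 hv) => H.
have := vt t0; nia.
Qed.

Lemma teich_unit a : a != 0 -> teich a != 0 /\ v (teich a) = 0.
Proof. by move=> a0; apply: unit_of_red; [apply: inO_teich|rewrite teichK]. Qed.

Lemma teichB_unit a b : a != b -> teich a - teich b != 0 /\ v (teich a - teich b) = 0.
Proof.
move=> ab; apply: unit_of_red; first exact: (vgeB hv (inO_teich a) (inO_teich b)).
by rewrite redB ?teichK ?subr_eq0 //; apply: inO_teich.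
Qed.

Lemma valuation_varpiXz (n : int) : v (varpi ^ n) = n.
Proof. by rewrite valuationXz ?varpi_neq0 // valuation_varpi mulr1. Qed.

Lemma valuation_varpiV : v varpi^-1 = -1.
Proof. by rewrite valuationV ?varpi_neq0 // valuation_varpi. Qed.
Lemma varpiV_neq0 : varpi^-1 != 0. Proof. by rewrite invr_eq0 varpi_neq0. Qed.
Lemma inO_varpi : inO v varpi. Proof. by right; rewrite valuation_varpi. Qed.

Lemma vge1_varpiM x : inO v x -> vge v 1 (varpi * x).
Proof. by move=> hx; have := vgeM hv (vge_val v varpi) hx; rewrite valuation_varpi addr0. Qed.

Lemma inO_divvarpi x : vge v 1 x -> inO v (x / varpi).
Proof. by move=> hx; have := vgeM hv hx (vge_val v varpi^-1); rewrite valuation_varpiV subrr. Qed.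

Definition upart x := x / varpi ^ (v x).

Lemma upart_unit x : x != 0 -> [/\ upart x != 0, v (upart x) = 0 & inO v (upart x)].
Proof.
move=> x0; have p0 : varpi ^ (v x) != 0 by apply: expfz_neq0; apply: varpi_neq0.
have vu : v (upart x) = 0.
  by rewrite /upart valuationM ?invr_eq0 // valuationV // valuation_varpiXz subrr.
by split=> //; [rewrite /upart mulf_neq0 ?invr_eq0|right; rewrite vu].
Qed.

Lemma upartM x y : x != 0 -> y != 0 -> upart (x * y) = upart x * upart y.
Proof.
by move=> x0 y0; rewrite /upart valuationM // expfzDr ?varpi_neq0 // invfM mulrACA.
Qed.

Lemma red_upart_add_small x e : x != 0 -> vge v (v x + 1) e -> red (upart (x + e)) = red (upart x).
Proof.
move=> x0 he; have [s0 vs] := valuationD_small hv x0 he.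
have h1 : vge v 1 (e / varpi ^ v x).
  have := vgeM hv he (vge_val v (varpi ^ v x)^-1).
  by rewrite valuationV ?expfz_neq0 ?varpi_neq0 // valuation_varpiXz addrAC subrr.
have [_ _ hu] := upart_unit x0.
rewrite /upart vs mulrDl redD //; last exact: inO_vge1.
by rewrite (proj2 (red_eq0 (inO_vge1 h1)) h1) addr0.
Qed.

End LocalField.

Section Iwahori.
Variables (F : fieldType) (v : F -> int).
Hypothesis hv : discrete_valuation v.
Implicit Types a b c d e : F.

Definition inI2 a b c d := [/\ inO v a, inO v b, vge v 1 c, inO v d &
  a * d - b * c != 0 /\ v (a * d - b * c) = 0].

Lemma inI_mx2 a b c d : inI2 a b c d -> inI v (mx2 a b c d).
Proof.
case=> ha hb hc hd [D0 vD]; split; rewrite ?det_mx2 ?mx2_10 //.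
move=> i j; case: (ord2P i) => ->; case: (ord2P j) => ->;
  rewrite ?mx2_00 ?mx2_01 ?mx2_10 ?mx2_11 //.
exact: inO_vge1.
Qed.

Lemma inI2_mx2 a b c d : inI v (mx2 a b c d) -> inI2 a b c d.
Proof.
case=> hij; rewrite mx2_10 det_mx2 => hc D0 vD; split => //.
- by have := hij ord0 ord0; rewrite mx2_00.
- by have := hij ord0 ord_max; rewrite mx2_01.
- by have := hij ord_max ord_max; rewrite mx2_11.
Qed.

(* Since [b c] lies in [varpi O], the unit determinant forces [a] and [d] to be units. *)
Lemma inI2_diag_units a b c d : inI2 a b c d -> [/\ a != 0, v a = 0, d != 0 & v d = 0].
Proof.
case=> ha hb hc hd [D0 vD].
have hbc : vge v (v (a * d - b * c) + 1) (b * c) by rewrite vD add0r; apply: vgeMl.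
have [] := valuationD_small hv D0 hbc; rewrite subrK => ad0.
have a0 : a != 0 by apply: contraNneq ad0 => ->; rewrite mul0r.
have d0 : d != 0 by apply: contraNneq ad0 => ->; rewrite mulr0.
rewrite valuationM // vD => h.
by have := inO_val_ge0 a0 ha; have := inO_val_ge0 d0 hd; split=> //; lia.
Qed.

Lemma inIZ_scale_mx2 c a b e d : c != 0 -> inI2 a b e d -> inIZ v (c *: mx2 a b e d).
Proof. by move=> c0 hI; exists c, (mx2 a b e d); split=> //; split=> //; apply: inI_mx2. Qed.

Lemma inIZ_decomp h : inIZ v h ->
  exists c a b e, [/\ c != 0, inI2 a b e 1 & h = c *: mx2 a b e 1].
Proof.
case=> c [m [c0 [hm ->]]]; rewrite (mx2_eta m) in hm *; move/inI2_mx2: hm.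
set a := m ord0 ord0; set b := m ord0 ord_max.
set e := m ord_max ord0; set d := m ord_max ord_max => hI.
have [a0 va d0 vd] := inI2_diag_units hI.
case: hI => ha hb he hd [D0 vD].
have di : inO v d^-1 by apply: inOV.
exists (c * d), (a / d), (b / d), (e / d); split.
- by rewrite mulf_neq0.
- split; try by apply: (vgeMr hv).
  + exact: inO1.
  + have -> : a / d * 1 - b / d * (e / d) = (a * d - b * e) / (d ^+ 2) by field.
    split; first by rewrite mulf_neq0 // invr_eq0 expf_neq0.
    rewrite valuationM ?invr_eq0 ?expf_neq0 // valuationV ?expf_neq0 //.
    by rewrite valuationX // vd vD; lia.
- by rewrite !scale_mx2; congr mx2; field.
Qed.

Lemma inIZ_mul h1 h2 : inIZ v h1 -> inIZ v h2 -> inIZ v (h1 *m h2).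
Proof.
move=> /inIZ_decomp [c1 [a1 [b1 [e1 [c10 hI1 ->]]]]].
move=> /inIZ_decomp [c2 [a2 [b2 [e2 [c20 hI2 ->]]]]].
rewrite scalemx_mul mul_mx2; apply: inIZ_scale_mx2; first by rewrite mulf_neq0.
move: hI1 hI2 => [ha1 hb1 he1 _ [D1 vD1]] [ha2 hb2 he2 _ [D2 vD2]].
have hO1 := inO1 hv; have hOe1 := inO_vge1 he1; have hOe2 := inO_vge1 he2.
split.
- by apply: (inOD hv); apply: (inOM hv).
- by apply: (inOD hv); apply: (inOM hv).
- by rewrite mul1r; apply: (vgeD hv) => //; apply: (vgeMr hv).
- by apply: (inOD hv); apply: (inOM hv).
- rewrite (_ : _ - _ = (a1 * 1 - b1 * e1) * (a2 * 1 - b2 * e2)); last by ring.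
  by rewrite mulf_neq0 // valuationM // vD1 vD2.
Qed.

Lemma inIZ_inv h : inIZ v h -> exists h', [/\ inIZ v h', h' *m h = 1%:M & h *m h' = 1%:M].
Proof.
move=> /inIZ_decomp [c [a [b [e [c0 hI ->]]]]].
move: (hI) => [ha hb he _ [D vD]].
have cD : c * (a * 1 - b * e) != 0 by rewrite mulf_neq0.
pose h' := (c * (a * 1 - b * e))^-1 *: mx2 1 (- b) (- e) a.
have hI' : inI2 1 (- b) (- e) a.
  split; [exact: inO1|exact: inON|exact: vgeN|done|].
  by rewrite (_ : _ - _ = a * 1 - b * e) //; ring.
have hh'1 : h' *m (c *: mx2 a b e 1) = 1%:M.
  by rewrite scalemx_mul mul_mx2 mx2_1 scale_mx2; congr mx2; field; rewrite -[a]mulr1 D c0.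
by exists h'; split=> //; [exact: inIZ_scale_mx2 (invr_neq0 cD) hI'|apply: mulmx1C].
Qed.

Lemma inIZ_unitmx h : inIZ v h -> h \in unitmx.
Proof. by move=> /inIZ_inv [h' [_ e _]]; case: (mulmx1_unit e). Qed.

Lemma inI2_1 : inI2 1 0 0 1.
Proof.
split; [exact: inO1|exact: inO0|exact: vge0|exact: inO1|].
by rewrite mulr0 subr0 mulr1 oner_neq0 valuation1.
Qed.

Lemma inIZ1 : inIZ v 1%:M.
Proof. by rewrite -[1%:M]scale1r mx2_1; apply: inIZ_scale_mx2 (oner_neq0 F) inI2_1. Qed.

Lemma inIZ_cancel h y : inIZ v h -> inIZ v (h *m y) -> inIZ v y.
Proof.
move=> hh hhy; have [h' [hh' e _]] := inIZ_inv hh.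
by have := inIZ_mul hh' hhy; rewrite mulmxA e mul1mx.
Qed.

End Iwahori.

Section Character.
Variables (p : nat) (F : fieldType) (v : F -> int) (varpi : F) (k : finFieldType)
  (red : F -> k) (teich : k -> F).
Hypothesis hF : padic_field v p varpi red teich.
Let hv := padic_valuation hF.
Variables (C : fieldType) (iota : {rmorphism k -> C}) (r : nat).
Implicit Types (a b c d e : F) (g h x y : 'M[F]_2).

Local Notation chi := (chi v varpi red iota r).
Local Notation in_ind := (in_ind v varpi red iota r).
Local Notation IZ := (inIZ v).

Definition chiF (x : F) : C := iota (red (upart v varpi x)) ^+ r.

Lemma chiE h : chi h = chiF (h ord_max ord_max). Proof. by []. Qed.

Lemma chi_scale_mx2 c a b e d : chi (c *: mx2 a b e d) = chiF (c * d).
Proof. by rewrite chiE scale_mx2 mx2_11. Qed.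

Lemma chiFM (x y : F) : x != 0 -> y != 0 -> chiF (x * y) = chiF x * chiF y.
Proof.
move=> x0 y0; have [_ _ hx] := upart_unit hF x0; have [_ _ hy] := upart_unit hF y0.
by rewrite /chiF (upartM hF) // (redM hF) // rmorphM exprMn.
Qed.

Lemma chiF1 : chiF 1 = 1.
Proof.
by rewrite /chiF /upart (valuation1 hv) expr0z divr1 (red1 hF) rmorph1 expr1n.
Qed.

Lemma chiF_mul1D c e : c != 0 -> vge v 1 e -> chiF (c * (1 + e)) = chiF c.
Proof.
move=> c0 he; rewrite /chiF mulrDr mulr1 (red_upart_add_small hF) //.
by have := vgeM hv (vge_val v c) he.
Qed.

Lemma chiM h1 h2 : IZ h1 -> IZ h2 -> chi (h1 *m h2) = chi h1 * chi h2.
Proof.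
move=> /(inIZ_decomp hv) [c1 [a1 [b1 [e1 [c10 [_ _ he1 _ _] ->]]]]].
move=> /(inIZ_decomp hv) [c2 [a2 [b2 [e2 [c20 [_ hb2 _ _ _] ->]]]]].
rewrite scalemx_mul mul_mx2 !chi_scale_mx2 !mulr1 -chiFM // addrC.
by rewrite chiF_mul1D ?mulf_neq0 //; apply: (vgeMr hv).
Qed.

Lemma chi1 : chi 1%:M = 1.
Proof. by rewrite chiE mx2_1 mx2_11 chiF1. Qed.

Definition chi_ext h : C := if excluded_middle_informative (IZ h) then chi h else 0.

Lemma chi_extE h : IZ h -> chi_ext h = chi h.
Proof. by rewrite /chi_ext; case: excluded_middle_informative. Qed.

Lemma chi_extN h : ~ IZ h -> chi_ext h = 0.
Proof. by rewrite /chi_ext; case: excluded_middle_informative. Qed.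

Lemma chi_extM h y : IZ h -> chi_ext (h *m y) = chi h * chi_ext y.
Proof.
move=> hh; case: (excluded_middle_informative (IZ y)) => hy.
  by rewrite !chi_extE ?chiM //; apply: (inIZ_mul hv hh hy).
by rewrite !chi_extN ?mulr0 // => /(inIZ_cancel hv hh).
Qed.

Lemma chi_ext_neq0 h : chi_ext h != 0 -> IZ h.
Proof. by case: (excluded_middle_informative (IZ h)) => // /chi_extN ->; rewrite eqxx. Qed.

Definition bracket g : 'M[F]_2 -> C := fun x => chi_ext (x *m g).

Lemma in_ind_bracket g : g \in unitmx -> in_ind (bracket g).
Proof.
move=> gU; split.
- move=> x xU; rewrite /bracket chi_extN // => /(inIZ_unitmx hv).
  by rewrite unitmx_mul (negbTE xU).
- by move=> h x hh _; rewrite /bracket -mulmxA chi_extM.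
- exists [:: invmx g] => x /chi_ext_neq0 hx; exists (invmx g); first exact: mem_head.
  by exists (x *m g); rewrite mulmxK.
Qed.

Lemma is_bracket_bracket g : g \in unitmx -> is_bracket v varpi red iota r g (bracket g).
Proof.
move=> gU; split; first exact: in_ind_bracket.
  by rewrite /bracket mulVmx // chi_extE ?chi1 //; apply: (inIZ1 hv).
by move=> x /chi_ext_neq0 hx; exists (x *m g); rewrite mulmxK.
Qed.

Lemma in_ind0 : in_ind (fun _ => 0).
Proof. by split=> //; [move=> *; rewrite mulr0|exists [::] => x; rewrite eqxx]. Qed.

Lemma in_ind_lin (a : C) f1 f2 : in_ind f1 -> in_ind f2 -> in_ind (fun x => a * f1 x + f2 x).
Proof.
case=> [h1 h2 [s1 hs1]] [k1 k2 [s2 hs2]]; split.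
- by move=> x xU; rewrite h1 // k1 // mulr0 addr0.
- by move=> h x hh xU; rewrite h2 // k2 // mulrDr mulrCA.
- exists (s1 ++ s2) => x hx.
  have [e1|/hs1 [y ys hy]] := eqVneq (f1 x) 0.
    move: hx; rewrite e1 mulr0 add0r => /hs2 [y ys hy].
    by exists y => //; rewrite mem_cat ys orbT.
  by exists y => //; rewrite mem_cat ys.
Qed.

Lemma in_ind_unitmx f x : in_ind f -> f x != 0 -> x \in unitmx.
Proof. by case=> h _ _ fx; apply: contraNT fx => /h ->. Qed.

Lemma G_endo0 T : G_endo v varpi red iota r T -> T (fun _ => 0) = (fun _ => 0).
Proof.
case=> _ Hlin _; have := Hlin (-1) _ _ in_ind0 in_ind0.
have -> : (fun x : 'M[F]_2 => -1 * (0 : C) + 0) = (fun _ => 0).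
  by apply: functional_extensionality => x; rewrite mulr0 addr0.
by move=> ->; apply: functional_extensionality => x; rewrite mulN1r addNr.
Qed.

Section HeckeFormula.
Variables (t a : k -> 'M[F]_2) (T : ('M[F]_2 -> C) -> ('M[F]_2 -> C)).
Hypothesis hT : hecke_op v varpi red iota r t T.
Hypothesis t_unit : forall l, t l \in unitmx.
Hypothesis cosets_match : forall y, \sum_l chi_ext (a l *m y) = \sum_l chi_ext (y *m t l).

Lemma hecke_op_bracket g : g \in unitmx ->
  T (bracket g) = (fun z => \sum_l bracket g (a l *m z)).
Proof.
move=> gU; have tU l : g *m t l \in unitmx by rewrite unitmx_mul gU t_unit.
rewrite (proj2 hT _ _ _ gU (is_bracket_bracket gU) (fun l => is_bracket_bracket (tU l))).
apply: functional_extensionality => z; rewrite /bracket.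
under eq_bigr do rewrite mulmxA.
by under [RHS]eq_bigr do rewrite -mulmxA; rewrite cosets_match.
Qed.

(* Induction on the finite set of cosets supporting [f], peeling off one bracket at a time. *)
Lemma hecke_opE f : in_ind f -> forall z, T f z = \sum_l f (a l *m z).
Proof.
move=> hf; have [[_ Hlin _] _] := hT; case: (hf) => _ _ [s].
elim: s f hf => [|y s IH] f hf Hs z.
  have -> : f = (fun _ => 0).
    by apply: functional_extensionality => x; apply/eqP; apply: contraT => /Hs [].
  by rewrite (G_endo0 hT.1) big1.
have [yU|yNU] := boolP (y \in unitmx); last first.
  apply: IH => // x fx; have [w] := Hs _ fx; rewrite inE => /orP [/eqP ->|ws] [h [hh ex]].
    by move: (in_ind_unitmx hf fx); rewrite ex unitmx_mul (negbTE yNU) andbF.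
  by exists w => //; exists h.
have gU : invmx y \in unitmx by rewrite unitmx_inv.
pose f' x := - f y * bracket (invmx y) x + f x.
have hf' : in_ind f' by apply: in_ind_lin => //; apply: in_ind_bracket.
have Hs' x : f' x != 0 -> exists2 w, w \in s & exists h, IZ h /\ x = h *m w.
  move=> fx; case: (excluded_middle_informative (IZ (x *m invmx y))) => hx.
    move: fx; rewrite /f' /bracket chi_extE // -{2}(mulmxKV yU x).
    case: hf => _ -> // _.
    by rewrite mulNr mulrC addNr eqxx.
  have fx' : f x != 0 by move: fx; rewrite /f' /bracket chi_extN // mulr0 add0r.
  have [w] := Hs _ fx'; rewrite inE => /orP [/eqP ->|ws] [h [hh ex]].
    by case: hx; rewrite ex mulmxK.
  by exists w => //; exists h.
have -> : f = (fun x => f y * bracket (invmx y) x + f' x).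
  by apply: functional_extensionality => x; rewrite /f'; ring.
rewrite (Hlin _ _ _ (in_ind_bracket gU) hf') (hecke_op_bracket gU) IH // /f'.
by rewrite mulr_sumr -big_split /=; apply: eq_bigr => l _; ring.
Qed.

End HeckeFormula.
End Character.

Ltac solve_inO hF hv := repeat first [ assumption
  | apply: (inOD hv) | apply: (inOM hv) | apply: (inON hv) | apply: (inO1 hv)
  | apply: inO0 | apply: (inO_teich hF) | apply: (inO_varpi hF)
  | (apply: inO_vge1; assumption) ].

Section Cosets.
Variables (p : nat) (F : fieldType) (v : F -> int) (varpi : F) (k : finFieldType)
  (red : F -> k) (teich : k -> F).
Hypothesis hF : padic_field v p varpi red teich.
Let hv := padic_valuation hF.
Let varpi0 := varpi_neq0 hF.
Variables (C : fieldType) (iota : {rmorphism k -> C}) (r : nat).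
Implicit Types (a b c d e x : F) (h y : 'M[F]_2).

Local Notation chi := (chi v varpi red iota r).
Local Notation chi_ext := (chi_ext v varpi red iota r).
Local Notation IZ := (inIZ v).

Lemma coset_sums_match (a t : k -> 'M[F]_2) :
  (forall m m' y, IZ (a m *m y) -> IZ (a m' *m y) -> m = m') ->
  (forall l l' y, IZ (y *m t l) -> IZ (y *m t l') -> l = l') ->
  (forall m y, IZ (a m *m y) -> exists l, IZ (y *m t l) /\ chi (y *m t l) = chi (a m *m y)) ->
  (forall l y, IZ (y *m t l) -> exists m, IZ (a m *m y)) ->
  forall y, \sum_l chi_ext (a l *m y) = \sum_l chi_ext (y *m t l).
Proof.
move=> ua ut a_to_t t_to_a y.
case: (excluded_middle_informative (exists m, IZ (a m *m y))) => [[m hm]|nm].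
  have [l [hl hc]] := a_to_t _ _ hm.
  rewrite [LHS](bigD1 m) // [RHS](bigD1 l) //= !big1 ?addr0 ?chi_extE ?hc //.
    move=> l' /negbTE nl; rewrite chi_extN // => hl'.
    by have := ut _ _ _ hl hl'; move/eqP; rewrite eq_sym nl.
  move=> m' /negbTE nm'; rewrite chi_extN // => hm'.
  by have := ua _ _ _ hm hm'; move/eqP; rewrite eq_sym nm'.
rewrite !big1 // => l _; rewrite chi_extN // => h.
- by have [m hm] := t_to_a _ _ h; apply: nm; exists m.
- by apply: nm; exists l.
Qed.

Lemma cosets_distinct_l (a a' : k -> 'M[F]_2) :
  (forall m, a' m *m a m = 1%:M) -> (forall m m', IZ (a m' *m a' m) -> m = m') ->
  forall m m' y, IZ (a m *m y) -> IZ (a m' *m y) -> m = m'.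
Proof.
move=> inv hne m m' y h1 h2; have [h1' [hZ' _ e']] := inIZ_inv hv h1.
have ey : y *m h1' = a' m.
  by rewrite -(mul1mx (y *m h1')) -(inv m) -!mulmxA (mulmxA (a m)) e' mulmx1.
by apply: hne; have := inIZ_mul hv h2 hZ'; rewrite -mulmxA ey.
Qed.

Lemma cosets_distinct_r (t t' : k -> 'M[F]_2) :
  (forall l, t l *m t' l = 1%:M) -> (forall l l', IZ (t' l *m t l') -> l = l') ->
  forall l l' y, IZ (y *m t l) -> IZ (y *m t l') -> l = l'.
Proof.
move=> inv hne l l' y h1 h2; have [h1' [hZ' e _]] := inIZ_inv hv h1.
have ey : h1' *m y = t' l.
  by rewrite -(mulmx1 (h1' *m y)) -(inv l) !mulmxA -(mulmxA h1') e mul1mx.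
by apply: hne; have := inIZ_mul hv hZ' h2; rewrite mulmxA ey.
Qed.

Lemma inIZ_mx2_entries a b c d : IZ (mx2 a b c d) ->
  [/\ d != 0, inO v (a / d), inO v (b / d) & vge v 1 (c / d)].
Proof.
move=> /(inIZ_decomp hv) [c' [a' [b' [e' [c0 [ha hb he _ _]]]]]].
by rewrite scale_mx2 => /mx2_inj [-> -> -> ->]; rewrite mulr1 !(mulrC c') !mulfK.
Qed.

Lemma notIZ_lower_unit x : x != 0 -> v x = 0 -> ~ IZ (mx2 1 0 x 1).
Proof. by move=> x0 vx /inIZ_mx2_entries [_ _ _]; rewrite divr1 vgeE // vx. Qed.

Lemma notIZ_upper_unit x : x != 0 -> v x = 0 -> ~ IZ (mx2 1 (x / varpi) 0 1).
Proof.
have pV0 := varpiV_neq0 hF.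
move=> x0 vx /inIZ_mx2_entries [_ _ + _]; rewrite divr1 /inO vgeE ?mulf_neq0 //.
by rewrite (valuationM hv x0 pV0) vx (valuation_varpiV hF).
Qed.

(* The double coset [IZ t_m10 IZ] is both the union of the [t_m10 l IZ] and of the
   [IZ a_m10 m], and similarly for [t_12] and [a_12]; this turns each operator into a sum
   of left translates. *)
Definition a_m10 m := mx2 varpi 0 (varpi * teich m) 1.
Definition a_m10_inv m := mx2 varpi^-1 0 (- teich m) 1.
Definition t_m10_inv l := mx2 varpi^-1 (- teich l / varpi) 0 1.
Definition a_12 n := mx2 1 (teich n) 0 varpi.
Definition a_12_inv n := mx2 1 (- teich n / varpi) 0 varpi^-1.
Definition t_12_inv l := mx2 1 0 (- teich l) varpi^-1.

Lemma t_12E l : t_12 varpi teich l = mx2 1 0 (varpi * teich l) varpi.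
Proof. by rewrite /t_12 /betam /wm !mul_mx2; congr mx2; ring. Qed.

Lemma a_m10K m : a_m10_inv m *m a_m10 m = 1%:M. Proof. by mx2_field. Qed.
Lemma t_m10K l : t_m10 varpi teich l *m t_m10_inv l = 1%:M. Proof. by mx2_field. Qed.
Lemma a_12K n : a_12_inv n *m a_12 n = 1%:M. Proof. by mx2_field. Qed.
Lemma t_12K l : t_12 varpi teich l *m t_12_inv l = 1%:M. Proof. by rewrite t_12E; mx2_field. Qed.

Lemma a_m10_distinct m m' : IZ (a_m10 m' *m a_m10_inv m) -> m = m'.
Proof.
have -> : a_m10 m' *m a_m10_inv m = mx2 1 0 (teich m' - teich m) 1 by mx2_field.
have [->//|nm] := eqVneq m' m.
by have [d0 vd] := teichB_unit hF nm; move/(notIZ_lower_unit d0 vd).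
Qed.

Lemma t_m10_distinct l l' : IZ (t_m10_inv l *m t_m10 varpi teich l') -> l = l'.
Proof.
have -> : t_m10_inv l *m t_m10 varpi teich l' = mx2 1 ((teich l' - teich l) / varpi) 0 1.
  by mx2_field.
have [->//|nl] := eqVneq l' l.
by have [d0 vd] := teichB_unit hF nl; move/(notIZ_upper_unit d0 vd).
Qed.

Lemma a_12_distinct n n' : IZ (a_12 n' *m a_12_inv n) -> n = n'.
Proof.
have -> : a_12 n' *m a_12_inv n = mx2 1 ((teich n' - teich n) / varpi) 0 1 by mx2_field.
have [->//|nn] := eqVneq n' n.
by have [d0 vd] := teichB_unit hF nn; move/(notIZ_upper_unit d0 vd).
Qed.

Lemma t_12_distinct l l' : IZ (t_12_inv l *m t_12 varpi teich l') -> l = l'.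
Proof.
have -> : t_12_inv l *m t_12 varpi teich l' = mx2 1 0 (teich l' - teich l) 1.
  by rewrite t_12E; mx2_field.
have [->//|nl] := eqVneq l' l.
by have [d0 vd] := teichB_unit hF nl; move/(notIZ_lower_unit d0 vd).
Qed.

Lemma a_m10_to_t_m10 m y : IZ (a_m10 m *m y) ->
  exists l, IZ (y *m t_m10 varpi teich l) /\ chi (y *m t_m10 varpi teich l) = chi (a_m10 m *m y).
Proof.
move=> /(inIZ_decomp hv) [c [a [b [e [c0 hI eh]]]]].
have ey : y = a_m10_inv m *m (c *: mx2 a b e 1) by rewrite -eh mulmxA a_m10K mul1mx.
have [a0 va _ _] := inI2_diag_units hv hI; case: (hI) => ha hb he _ [D vD].
have ra : red a != 0 by apply: (red_unit_neq0 hF).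
pose l := - red b / red a; exists l.
have hl : vge v 1 (a * teich l + b).
  apply: (red_eq0 hF _).1; first by solve_inO hF hv.
  by rewrite (redD hF) ?(redM hF) ?(teichK hF) /l; [field|solve_inO hF hv..].
have hI2 : inI2 v a ((a * teich l + b) / varpi) (varpi * (e - teich m * a))
    (1 + (e * teich l - teich m * (a * teich l + b))).
  split=> //; [exact: (inO_divvarpi hF)|apply: (vge1_varpiM hF); solve_inO hF hv|solve_inO hF hv|].
  by rewrite (_ : _ - _ = a * 1 - b * e) //; field.
have -> : y *m t_m10 varpi teich l = c *: mx2 a ((a * teich l + b) / varpi)
    (varpi * (e - teich m * a)) (1 + (e * teich l - teich m * (a * teich l + b))).
  by rewrite ey -scalemxAr -scalemxAl; congr (_ *: _); mx2_field.
split; first exact: inIZ_scale_mx2 c0 hI2.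
rewrite eh !chi_scale_mx2 mulr1 (chiF_mul1D hF) //.
by apply: (vgeB hv); [apply: (vgeMr hv)|apply: (vgeMl hv)]; solve_inO hF hv.
Qed.

Lemma t_m10_to_a_m10 l y : IZ (y *m t_m10 varpi teich l) -> exists m, IZ (a_m10 m *m y).
Proof.
move=> /(inIZ_decomp hv) [c [a [b [e [c0 hI eh]]]]].
have ey : y = (c *: mx2 a b e 1) *m t_m10_inv l by rewrite -eh -mulmxA t_m10K mulmx1.
have [a0 va _ _] := inI2_diag_units hv hI; case: (hI) => ha hb he _ [D vD].
have ra : red a != 0 by apply: (red_unit_neq0 hF).
have hep : inO v (e / varpi) by apply: (inO_divvarpi hF).
pose m := - red (e / varpi) / red a; exists m.
have hm : vge v 1 (teich m * a + e / varpi).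
  apply: (red_eq0 hF _).1; first by solve_inO hF hv.
  by rewrite (redD hF) ?(redM hF (inO_teich hF _) ha) ?(teichK hF) /m; [field|solve_inO hF hv..].
have hI2 : inI2 v a (- a * teich l + varpi * b) (teich m * a + e / varpi)
    (1 - teich l * (teich m * a + e / varpi) + varpi * teich m * b).
  split=> //; try by solve_inO hF hv.
  by rewrite (_ : _ - _ = a * 1 - b * e) //; field.
have -> : a_m10 m *m y = c *: mx2 a (- a * teich l + varpi * b) (teich m * a + e / varpi)
    (1 - teich l * (teich m * a + e / varpi) + varpi * teich m * b).
  by rewrite ey mulmxA -scalemxAr -scalemxAl; congr (_ *: _); mx2_field.
exact: inIZ_scale_mx2 c0 hI2.
Qed.

Lemma a_12_to_t_12 n y : IZ (a_12 n *m y) ->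
  exists l, IZ (y *m t_12 varpi teich l) /\ chi (y *m t_12 varpi teich l) = chi (a_12 n *m y).
Proof.
move=> /(inIZ_decomp hv) [c [a [b [e [c0 hI eh]]]]].
have ey : y = a_12_inv n *m (c *: mx2 a b e 1) by rewrite -eh mulmxA a_12K mul1mx.
case: (hI) => ha hb he _ [D vD].
have hep : inO v (e / varpi) by apply: (inO_divvarpi hF).
pose l := - red (e / varpi); exists l.
have hl : vge v 1 (e / varpi + teich l).
  apply: (red_eq0 hF _).1; first by solve_inO hF hv.
  by rewrite (redD hF) ?(teichK hF) ?subrr //; solve_inO hF hv.
have hI2 : inI2 v (a - teich n * (e / varpi) + varpi * b * teich l - teich n * teich l)
    (varpi * b - teich n) (e / varpi + teich l) 1.
  split=> //; try by solve_inO hF hv.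
  by rewrite (_ : _ - _ = a * 1 - b * e) //; field.
have -> : y *m t_12 varpi teich l = c *: mx2
    (a - teich n * (e / varpi) + varpi * b * teich l - teich n * teich l)
    (varpi * b - teich n) (e / varpi + teich l) 1.
  by rewrite ey t_12E -scalemxAr -scalemxAl; congr (_ *: _); mx2_field.
by split; [exact: inIZ_scale_mx2 c0 hI2|rewrite eh !chi_scale_mx2].
Qed.

Lemma t_12_to_a_12 l y : IZ (y *m t_12 varpi teich l) -> exists n, IZ (a_12 n *m y).
Proof.
move=> /(inIZ_decomp hv) [c [a [b [e [c0 hI eh]]]]].
have ey : y = (c *: mx2 a b e 1) *m t_12_inv l by rewrite -eh -mulmxA t_12K mulmx1.
case: (hI) => ha hb he _ [D vD].
pose n := - red b; exists n.
have hn : vge v 1 (b + teich n).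
  apply: (red_eq0 hF _).1; first by solve_inO hF hv.
  by rewrite (redD hF) ?(teichK hF) ?subrr //; solve_inO hF hv.
have hI2 : inI2 v (a + teich n * e - teich l * (b + teich n))
    ((b + teich n) / varpi) (varpi * (e - teich l)) 1.
  split; [solve_inO hF hv|exact: (inO_divvarpi hF)|apply: (vge1_varpiM hF); solve_inO hF hv|
    exact: (inO1 hv)|].
  by rewrite (_ : _ - _ = a * 1 - b * e) //; field.
have -> : a_12 n *m y = c *: mx2 (a + teich n * e - teich l * (b + teich n))
    ((b + teich n) / varpi) (varpi * (e - teich l)) 1.
  by rewrite ey mulmxA -scalemxAr -scalemxAl; congr (_ *: _); mx2_field.
exact: inIZ_scale_mx2 c0 hI2.
Qed.

Lemma T_m10E T : hecke_op v varpi red iota r (t_m10 varpi teich) T ->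
  forall f, in_ind v varpi red iota r f -> forall z, T f z = \sum_m f (a_m10 m *m z).
Proof.
move=> hT; apply: (hecke_opE hF hT) => [l|].
  by rewrite unitmx_mx2 mulr1 mulr0 subr0.
apply: coset_sums_match.
- exact: cosets_distinct_l a_m10K a_m10_distinct.
- exact: cosets_distinct_r t_m10K t_m10_distinct.
- exact: a_m10_to_t_m10.
- exact: t_m10_to_a_m10.
Qed.

Lemma T_12E T : hecke_op v varpi red iota r (t_12 varpi teich) T ->
  forall f, in_ind v varpi red iota r f -> forall z, T f z = \sum_n f (a_12 n *m z).
Proof.
move=> hT; apply: (hecke_opE hF hT) => [l|].
  by rewrite t_12E unitmx_mx2 mul0r subr0 mul1r.
apply: coset_sums_match.
- exact: cosets_distinct_l a_12K a_12_distinct.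
- exact: cosets_distinct_r t_12K t_12_distinct.
- exact: a_12_to_t_12.
- exact: t_12_to_a_12.
Qed.
End Cosets.

Section Heights.
Variables (p : nat) (F : fieldType) (v : F -> int) (varpi : F) (k : finFieldType)
  (red : F -> k) (teich : k -> F).
Hypothesis hF : padic_field v p varpi red teich.
Let hv := padic_valuation hF.
Let varpi0 := varpi_neq0 hF.
Implicit Types (a b c d e : F) (h x : 'M[F]_2).

Local Notation IZ := (inIZ v).

(* On the Bruhat-Tits tree, [vheight x] depends only on the vertex [K Z x] and [eheight x]
   only on the edge [I Z x], whose ends are the vertices of [x] and [betam x]. *)
Definition vheight x := v (\det x) - 2 * val2 v (x ord0 ord0) (x ord_max ord0).
Definition eheight x := Num.max (vheight x) (vheight (betam varpi *m x)).

Lemma vheight_mx2 a b c d : vheight (mx2 a b c d) = v (a * d - b * c) - 2 * val2 v a c.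
Proof. by rewrite /vheight det_mx2 mx2_00 mx2_10. Qed.

Lemma betam_mx2 (x1 x2 x3 x4 : F) :
  betam varpi *m mx2 x1 x2 x3 x4 = mx2 x3 x4 (varpi * x1) (varpi * x2).
Proof. by rewrite /betam mul_mx2; congr mx2; ring. Qed.

Lemma vheight_betam (x1 x2 x3 x4 : F) : x1 * x4 - x2 * x3 != 0 ->
  vheight (betam varpi *m mx2 x1 x2 x3 x4) =
  v (x1 * x4 - x2 * x3) + 1 - 2 * val2 v x3 (varpi * x1).
Proof.
move=> d0; rewrite betam_mx2 vheight_mx2.
rewrite (_ : _ - _ = - (varpi * (x1 * x4 - x2 * x3))); last by ring.
by rewrite (valuationN hv) (valuationM hv) // (valuation_varpi hF); lia.
Qed.

Lemma vheight_GL2O c A B E D x : c != 0 -> inO v A -> inO v B -> inO v E -> inO v D ->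
  A * D - B * E != 0 -> v (A * D - B * E) = 0 -> x \in unitmx ->
  vheight ((c *: mx2 A B E D) *m x) = vheight x.
Proof.
move=> c0 hA hB hE hD d0 vd; rewrite [x]mx2_eta unitmx_mx2.
set x1 := x ord0 ord0; set x2 := x ord0 ord_max.
set x3 := x ord_max ord0; set x4 := x ord_max ord_max => dx.
have nz : x1 != 0 \/ x3 != 0.
  have [h1|] := eqVneq x1 0; last by left.
  by have [h3|] := eqVneq x3 0; [move: dx; rewrite h1 h3 !mul0r mulr0 subrr eqxx|right].
have ddet : (A * D - B * E) * (x1 * x4 - x2 * x3) =
    (A * x1 + B * x3) * (E * x2 + D * x4) - (A * x2 + B * x4) * (E * x1 + D * x3).
  by ring.
have nz' : A * x1 + B * x3 != 0 \/ E * x1 + D * x3 != 0.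
  have [u1|] := eqVneq (A * x1 + B * x3) 0; last by left.
  have [u2|] := eqVneq (E * x1 + D * x3) 0; last by right.
  by move/eqP: ddet; rewrite u1 u2 mul0r mulr0 subrr mulf_eq0 (negbTE d0) (negbTE dx).
rewrite -scalemxAl mul_mx2 scale_mx2 !vheight_mx2 val2M // val2_GL2O //.
rewrite (_ : _ - _ = (c * c) * ((A * D - B * E) * (x1 * x4 - x2 * x3))); last by ring.
by rewrite !(valuationM hv) ?mulf_neq0 // vd; lia.
Qed.

Lemma eheight_inIZ h x : IZ h -> x \in unitmx -> eheight (h *m x) = eheight x.
Proof.
move=> /(inIZ_decomp hv) [c [a [b [e [c0 [ha hb he _ [D vD]] ->]]]]] xU.
have hO1 := inO1 hv; have hOe := inO_vge1 he.
rewrite /eheight vheight_GL2O //.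
have -> : betam varpi *m (c *: mx2 a b e 1 *m x) =
    (c *: mx2 1 (e / varpi) (varpi * b) a) *m (betam varpi *m x).
  rewrite !mulmxA; congr (_ *m x).
  by rewrite -scalemxAr -scalemxAl; congr (_ *: _); mx2_field.
have hdet : 1 * a - e / varpi * (varpi * b) = a * 1 - b * e by field.
rewrite vheight_GL2O ?hdet //.
- exact: (inO_divvarpi hF).
- by apply: (inOM hv) => //; apply: (inO_varpi hF).
- by rewrite unitmx_mul xU /betam unitmx_mx2 !mul0r mul1r sub0r oppr_eq0 andbT.
Qed.

Lemma eheight1 : eheight 1%:M = 0.
Proof.
rewrite /eheight mulmx1 mx2_1 /betam !vheight_mx2 val2_0r val2_0l.
rewrite ?mulr0 ?mul0r ?mulr1 ?mul1r ?subr0 ?sub0r (valuationN hv) (valuation_varpi hF).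
by rewrite (valuation1 hv); lia.
Qed.

Lemma eheight_inIZ1 h : IZ h -> eheight h = 0.
Proof. by move=> hh; rewrite -[h]mulmx1 eheight_inIZ ?unitmx1 // eheight1. Qed.

Lemma notIZ_eheight x : eheight x != 0 -> ~ IZ x.
Proof. by move=> hx /eheight_inIZ1 e; rewrite e eqxx in hx. Qed.

Definition lower_unip m := mx2 1 0 (teich m) 1.
Definition upper_unip n := mx2 1 (teich n / varpi) 0 1.

Lemma lower_unip0 : lower_unip 0 = 1%:M. Proof. by rewrite /lower_unip (teich0 hF) mx2_1. Qed.
Lemma upper_unip0 : upper_unip 0 = 1%:M.
Proof. by rewrite /upper_unip (teich0 hF) mul0r mx2_1. Qed.

Lemma a_m10_fan m x : a_m10 varpi teich m *m (a_m10_inv varpi teich 0 *m x) = lower_unip m *m x.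
Proof. by rewrite mulmxA /a_m10 /a_m10_inv /lower_unip (teich0 hF); congr (_ *m x); mx2_field. Qed.

Lemma a_12_fan n x : a_12 varpi teich n *m (a_12_inv varpi teich 0 *m x) = upper_unip n *m x.
Proof. by rewrite mulmxA /a_12 /a_12_inv /upper_unip (teich0 hF); congr (_ *m x); mx2_field. Qed.

Lemma lower_unip_unitmx m : lower_unip m \in unitmx.
Proof. by rewrite unitmx_mx2 mulr1 mul0r subr0 oner_neq0. Qed.

Lemma upper_unip_unitmx n : upper_unip n \in unitmx.
Proof. by rewrite unitmx_mx2 mulr1 mulr0 subr0 oner_neq0. Qed.

Lemma eheight_upper_triangular (x1 x2 x4 : F) : x1 != 0 -> x4 != 0 ->
  eheight (mx2 x1 x2 0 x4) = v (x1 * x4) - 2 * v x1.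
Proof.
move=> h1 h4; have d0 : x1 * x4 - x2 * 0 != 0 by rewrite mulr0 subr0 mulf_neq0.
rewrite /eheight vheight_betam // vheight_mx2 val2_0r val2_0l mulr0 subr0.
by rewrite !(valuationM hv) // (valuation_varpi hF); lia.
Qed.

Lemma eheight_lower_unip m (x1 x2 x4 : F) : m != 0 -> x1 != 0 -> x4 != 0 ->
  eheight (lower_unip m *m mx2 x1 x2 0 x4) = eheight (mx2 x1 x2 0 x4) + 1.
Proof.
move=> m0 h1 h4; have [t0 vt] := teich_unit hF m0.
rewrite eheight_upper_triangular // /lower_unip mul_mx2 !mul1r !mul0r !addr0.
have hdet : x1 * (teich m * x2 + x4) - x2 * (teich m * x1) = x1 * x4 by ring.
have vtx : v (teich m * x1) = v x1 by rewrite (valuationM hv) // vt add0r.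
have vpx : v (varpi * x1) = 1 + v x1 by rewrite (valuationM hv) // (valuation_varpi hF).
rewrite /eheight vheight_betam ?hdet ?mulf_neq0 // vheight_mx2 hdet.
rewrite (@val2_l _ _ x1) ?mulf_neq0 ?vtx //.
rewrite (@val2_l _ _ (teich m * x1)) ?mulf_neq0 ?vtx ?vpx //; last lia.
by rewrite (valuationM hv) //; lia.
Qed.

Lemma eheight_lower_dominant (x1 x2 x3 x4 : F) : x1 * x4 - x2 * x3 != 0 -> x3 != 0 ->
  x1 = 0 \/ v x3 <= v x1 ->
  eheight (mx2 x1 x2 x3 x4) = v (x1 * x4 - x2 * x3) - 2 * v x3 + 1.
Proof.
move=> dx h3 hx; rewrite /eheight vheight_betam // vheight_mx2.
have [e1|x10] := eqVneq x1 0; first by rewrite e1 mulr0 val2_0r val2_0l; lia.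
case: hx => [e1|hx]; first by rewrite e1 eqxx in x10.
have vpx : v (varpi * x1) = 1 + v x1 by rewrite (valuationM hv) // (valuation_varpi hF).
rewrite (@val2_r _ _ x1) // (@val2_l _ _ x3) ?mulf_neq0 ?vpx //; lia.
Qed.

Lemma eheight_upper_unip n (x1 x2 x3 x4 : F) : n != 0 -> x1 * x4 - x2 * x3 != 0 -> x3 != 0 ->
  x1 = 0 \/ v x3 <= v x1 ->
  eheight (upper_unip n *m mx2 x1 x2 x3 x4) = eheight (mx2 x1 x2 x3 x4) + 1.
Proof.
move=> n0 dx h3 hx; have [t0 vt] := teich_unit hF n0.
have pV0 := varpiV_neq0 hF.
rewrite eheight_lower_dominant //; set u := teich n / varpi * x3.
have vu : v u = v x3 - 1.
  by rewrite !(valuationM hv) ?mulf_neq0 // vt (valuation_varpiV hF); lia.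
have [w0 vw] : x1 + u != 0 /\ v (x1 + u) = v x3 - 1.
  have [->|x10] := eqVneq x1 0; first by rewrite add0r -vu; split=> //; rewrite !mulf_neq0.
  case: hx => [e1|hx]; first by rewrite e1 eqxx in x10.
  by rewrite addrC -vu; apply: (valuationD_small hv); [rewrite !mulf_neq0|right; lia].
have -> : upper_unip n *m mx2 x1 x2 x3 x4 = mx2 (x1 + u) (x2 + teich n / varpi * x4) x3 x4.
  by rewrite /upper_unip /u mul_mx2; congr mx2; ring.
have hdet : (x1 + u) * x4 - (x2 + teich n / varpi * x4) * x3 = x1 * x4 - x2 * x3.
  by rewrite /u; ring.
have vpx : v (varpi * (x1 + u)) = v x3.
  by rewrite (valuationM hv) // (valuation_varpi hF) vw; lia.
rewrite /eheight vheight_betam ?hdet // vheight_mx2 hdet.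
rewrite (@val2_l _ _ (x1 + u)) // ?vw; last lia.
rewrite (@val2_l _ _ x3) ?mulf_neq0 ?vpx //; lia.
Qed.

End Heights.

Lemma seq_bounded_above (T : eqType) (f : T -> int) (s : seq T) :
  exists N, forall y, y \in s -> f y <= N.
Proof.
elim: s => [|y s [N HN]]; first by exists 0.
by exists (Num.max (f y) N) => z; rewrite inE => /orP [/eqP ->|/HN]; lia.
Qed.

Section LeafArgument.
Variables (p : nat) (F : fieldType) (v : F -> int) (varpi : F) (k : finFieldType)
  (red : F -> k) (teich : k -> F).
Hypothesis hF : padic_field v p varpi red teich.
Let hv := padic_valuation hF.
Variables (C : fieldType) (iota : {rmorphism k -> C}) (r : nat).
Variables f1 f2 : 'M[F]_2 -> C.
Hypotheses (hf1 : in_ind v varpi red iota r f1) (hf2 : in_ind v varpi red iota r f2).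
Hypothesis sum_a_m10 : forall z, \sum_m f1 (a_m10 varpi teich m *m z) = 0.
Hypothesis sum_a_12 : forall z, \sum_n f2 (a_12 varpi teich n *m z) = 0.
Hypothesis f1_add_f2_notIZ : forall x, ~ inIZ v x -> f1 x + f2 x = 0.
Implicit Types x y : 'M[F]_2.

Local Notation IZ := (inIZ v).
Local Notation eheight := (eheight v varpi).
Local Notation lower_unip := (lower_unip teich).
Local Notation upper_unip := (upper_unip varpi teich).

Lemma support_eheight_bounded :
  exists N, forall x, f1 x != 0 \/ f2 x != 0 -> eheight x <= N.
Proof.
case: (hf1) => _ _ [s1 hs1]; case: (hf2) => _ _ [s2 hs2].
have [N HN] := seq_bounded_above eheight (s1 ++ s2); exists N => x hx.
have xU : x \in unitmx.
  by case: hx => hx; [apply: in_ind_unitmx hf1 hx|apply: in_ind_unitmx hf2 hx].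
have [y ys [h [hh ex]]] : exists2 y, y \in s1 ++ s2 & exists h, IZ h /\ x = h *m y.
  case: hx => [/hs1|/hs2] [y ys hy]; exists y => //; by rewrite mem_cat ys ?orbT.
have yU : y \in unitmx by move: xU; rewrite ex unitmx_mul => /andP [].
by rewrite ex (eheight_inIZ hF) //; apply: HN.
Qed.

Lemma f1_fan_vanish x : (forall m, m != 0 -> f1 (lower_unip m *m x) = 0) -> f1 x = 0.
Proof.
move=> hm; have := sum_a_m10 (a_m10_inv varpi teich 0 *m x).
under eq_bigr do rewrite (a_m10_fan hF).
by rewrite (bigD1 0) //= (lower_unip0 hF) mul1mx big1 ?addr0.
Qed.

Lemma f2_fan_vanish x : (forall n, n != 0 -> f2 (upper_unip n *m x) = 0) -> f2 x = 0.
Proof.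
move=> hn; have := sum_a_12 (a_12_inv varpi teich 0 *m x).
under eq_bigr do rewrite (a_12_fan hF).
by rewrite (bigD1 0) //= (upper_unip0 hF) mul1mx big1 ?addr0.
Qed.

Section Step.
Variable x : 'M[F]_2.
Hypotheses (xU : x \in unitmx) (xNIZ : ~ IZ x).
Hypothesis vanish_above :
  forall y, y \in unitmx -> eheight y = eheight x + 1 -> f1 y = 0 /\ f2 y = 0.

Lemma f2_vanish_lower_dominant (x1 x2 x3 x4 : F) : x = mx2 x1 x2 x3 x4 -> x3 != 0 ->
  x1 = 0 \/ v x3 <= v x1 -> f2 x = 0.
Proof.
move=> ex h3 hx; have dx : x1 * x4 - x2 * x3 != 0 by rewrite -unitmx_mx2 -ex.
apply: f2_fan_vanish => n n0; apply: (vanish_above _ _).2.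
  by rewrite unitmx_mul upper_unip_unitmx xU.
by rewrite ex (eheight_upper_unip hF).
Qed.

(* Left multiplication by a lower unipotent element of [I] makes [x] upper triangular. *)
Lemma f1_vanish_upper_dominant (x1 x2 x3 x4 : F) : x = mx2 x1 x2 x3 x4 -> x1 != 0 ->
  vge v 1 (x3 / x1) -> f1 x = 0.
Proof.
move=> ex x10 hq; have dx : x1 * x4 - x2 * x3 != 0 by rewrite -unitmx_mx2 -ex.
pose i := mx2 1 0 (- x3 / x1) 1.
have hi : IZ i.
  rewrite /i -[mx2 _ _ _ _]scale1r; apply: inIZ_scale_mx2 (oner_neq0 F) _.
  split; [exact: (inO1 hv)|exact: inO0|by rewrite mulNr; apply: (vgeN hv)|exact: (inO1 hv)|].
  by rewrite mulr1 mul0r subr0 oner_neq0 (valuation1 hv).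
have ci : chi v varpi red iota r i = 1 by rewrite chiE mx2_11 (chiF1 hF).
have x4' : x4 - x3 * x2 / x1 != 0.
  have hd : x1 * x4 - x2 * x3 = x1 * (x4 - x3 * x2 / x1) by field.
  by move: dx; rewrite hd mulf_eq0 negb_or => /andP [].
have eix : i *m x = mx2 x1 x2 0 (x4 - x3 * x2 / x1) by rewrite ex; mx2_field.
case: (hf1) => _ f1M _; rewrite -[f1 x]mul1r -ci -f1M // eix.
apply: f1_fan_vanish => m m0; apply: (vanish_above _ _).1.
  by rewrite unitmx_mul lower_unip_unitmx -eix unitmx_mul (inIZ_unitmx hv hi).
by rewrite (eheight_lower_unip hF) // -eix (eheight_inIZ hF).
Qed.

Lemma vanish_step : f1 x = 0 /\ f2 x = 0.
Proof.
have fsum := f1_add_f2_notIZ xNIZ; have ex := mx2_eta x.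
set x1 := x ord0 ord0 in ex; set x2 := x ord0 ord_max in ex.
set x3 := x ord_max ord0 in ex; set x4 := x ord_max ord_max in ex.
have dx : x1 * x4 - x2 * x3 != 0 by rewrite -unitmx_mx2 -ex.
have [x30|h3] := eqVneq x3 0.
  have x10 : x1 != 0 by apply: contraNneq dx => ->; rewrite x30 !mul0r mulr0 subrr.
  have hq : vge v 1 (x3 / x1) by rewrite x30 mul0r; exact: vge0.
  by have e1 := f1_vanish_upper_dominant ex x10 hq; move: fsum; rewrite e1 add0r.
have [x10|x10] := eqVneq x1 0.
  by have e2 := f2_vanish_lower_dominant ex h3 (or_introl x10); move: fsum; rewrite e2 addr0.
have [hx|hx] := lerP (v x3) (v x1).
  by have e2 := f2_vanish_lower_dominant ex h3 (or_intror hx); move: fsum; rewrite e2 addr0.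
have hq : vge v 1 (x3 / x1).
  by right; rewrite (valuationM hv) ?invr_eq0 // (valuationV hv) //; lia.
by have e1 := f1_vanish_upper_dominant ex x10 hq; move: fsum; rewrite e1 add0r.
Qed.

End Step.

(* Downward induction on the height, starting above the (finite) support. *)
Lemma vanish_notIZ x : x \in unitmx -> ~ IZ x -> 0 <= eheight x -> f1 x = 0 /\ f2 x = 0.
Proof.
have [N HN] := support_eheight_bounded.
suff H n : forall x, x \in unitmx -> ~ IZ x -> 0 <= eheight x -> N - n%:Z < eheight x ->
    f1 x = 0 /\ f2 x = 0.
  by move=> xU xNIZ x0; apply: (H (absz N).+1) => //; lia.
elim: n => [|n IH] {}x xU xNIZ x0 xN.
  have [e1|/(fun h => HN x (or_introl h))] := eqVneq (f1 x) 0; last lia.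
  by have [e2|/(fun h => HN x (or_intror h))] := eqVneq (f2 x) 0; last lia.
apply: vanish_step => // y yU ey; apply: IH => //; try lia.
by apply: (notIZ_eheight hF); rewrite ey; lia.
Qed.

Lemma vanish1 : f1 1%:M = 0 /\ f2 1%:M = 0.
Proof.
split.
- apply: f1_fan_vanish => m m0; rewrite mulmx1.
  have em : eheight (lower_unip m) = 1.
    rewrite -[lower_unip m]mulmx1 mx2_1 (eheight_lower_unip hF) ?oner_neq0 //.
    by rewrite (eheight_upper_triangular hF) ?oner_neq0 // mulr1 (valuation1 hv).
  apply: (vanish_notIZ _ _ _).1; rewrite ?lower_unip_unitmx ?em //.
  by apply: (notIZ_eheight hF); rewrite em.
- apply: f2_fan_vanish => n n0; rewrite mulmx1.
  have [t0 vt] := teich_unit hF n0.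
  apply: (vanish_notIZ _ _ _).2; first exact: upper_unip_unitmx.
    by rewrite /upper_unip; apply: (notIZ_upper_unit hF).
  by rewrite /upper_unip (eheight_upper_triangular hF) ?oner_neq0 // mulr1 (valuation1 hv).
Qed.

End LeafArgument.

Lemma bracket1_notin_kernel_sum (p : nat) (F : fieldType) (v : F -> int) (varpi : F)
  (k : finFieldType) (red : F -> k) (teich : k -> F)
  (hF : padic_field v p varpi red teich)
  (C : fieldType) (iota : {rmorphism k -> C}) (r : nat)
  (Tm10 T12 : ('M[F]_2 -> C) -> ('M[F]_2 -> C))
  (hTm10 : hecke_op v varpi red iota r (t_m10 varpi teich) Tm10)
  (hT12 : hecke_op v varpi red iota r (t_12 varpi teich) T12)
  (f1 f2 : 'M[F]_2 -> C) :
  in_ker v varpi red iota r Tm10 f1 -> in_ker v varpi red iota r T12 f2 ->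
  ~ (forall x, bracket v varpi red iota r 1%:M x = f1 x + f2 x).
Proof.
move=> [hf1 Tf1] [hf2 Tf2] hsum.
have sum1 z : \sum_m f1 (a_m10 varpi teich m *m z) = 0.
  by rewrite -(T_m10E hF hTm10 hf1) Tf1.
have sum2 z : \sum_n f2 (a_12 varpi teich n *m z) = 0.
  by rewrite -(T_12E hF hT12 hf2) Tf2.
have sumN x : ~ inIZ v x -> f1 x + f2 x = 0.
  by move=> hx; rewrite -hsum /bracket mulmx1 chi_extN.
have [e1 e2] := vanish1 hF hf1 hf2 sum1 sum2 sumN.
have := hsum 1%:M; rewrite e1 e2 addr0 /bracket mulmx1 chi_extE ?(chi1 hF).
  by move/eqP; rewrite oner_eq0.
exact: inIZ1 (padic_valuation hF).
Qed.

Theorem lemma3p5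
  (p : nat) (F : fieldType) (v : F -> int) (varpi : F) (k : finFieldType)
  (red : F -> k) (teich : k -> F)
  (hF : padic_field v p varpi red teich)
  (C : closedFieldType) (hCp : p \in [pchar C])
  (hCalg : forall c : C, exists n, (0 < n)%N /\ c ^+ (p ^ n) = c)
  (iota : {rmorphism k -> C})
  (r : nat) (hr : (0 < r < #|k| - 1)%N)
  (Tm10 T12 : ('M[F]_2 -> C) -> ('M[F]_2 -> C))
  (hTm10 : hecke_op v varpi red iota r (t_m10 varpi teich) Tm10)
  (hT12 : hecke_op v varpi red iota r (t_12 varpi teich) T12) :
  ~ ( (forall f, in_ind v varpi red iota r f ->
         exists f1 f2, in_ker v varpi red iota r Tm10 f1 /\
                       in_ker v varpi red iota r T12 f2 /\
                       forall x, f x = f1 x + f2 x)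
      /\ (forall f, in_ker v varpi red iota r Tm10 f ->
                    in_ker v varpi red iota r T12 f -> f = (fun _ => 0)) ).
Proof.
move=> [decomp _].
have [f1 [f2 [ker1 [ker2 hsum]]]] := decomp _ (in_ind_bracket hF iota r (unitmx1 F 2)).
exact: (bracket1_notin_kernel_sum hF hTm10 hT12 ker1 ker2 hsum).
Qed.
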